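(* Let $t,n,k\ge1$ and $d\ge 0$ be integers with $(d+1)\mid t$. Every $d$-runlength constrained $k$-disjunct binary $t\times n$ matrix satisfies $t\ge\min(n,\,1+k(d+1))$.
   Context: A binary $t\times n$ matrix $M$ is $d$-runlength constrained if in every column, any two $1$'s are separated by a run of at least $d$ zeros, i.e. $M_{ij}=M_{i'j}=1$ with $i<i'$ implies $i'-i\ge d+1$. A binary matrix $M$ is $k$-disjunct if for every column $j$ and every set $S$ of at most $k$ columns with $j\notin S$, $\mathsf{supp}(M_{\cdot j})\not\subseteq\bigcup_{j'\in S}\mathsf{supp}(M_{\cdot j'})$, where $\mathsf{supp}$ denotes the support. *)

From mathcomp Require Import all_boot all_order all_algebra.
Set Implicit Arguments. Unset Strict Implicit. Unset Printing Implicit Defensive.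

Definition col_supp (t n : nat) (M : 'M[bool]_(t, n)) (j : 'I_n) : {set 'I_t} :=
  [set i | M i j].

Definition runlength_constrained (d t n : nat) (M : 'M[bool]_(t, n)) : Prop :=
  forall (j : 'I_n) (i i' : 'I_t), M i j -> M i' j -> (i < i')%N -> (d.+1 <= i' - i)%N.

Definition disjunct (k t n : nat) (M : 'M[bool]_(t, n)) : Prop :=
  forall (j : 'I_n) (S : {set 'I_n}), (#|S| <= k)%N -> j \notin S ->
    ~~ (col_supp M j \subset \bigcup_(j' in S) col_supp M j').

(* A column of a d-runlength constrained matrix has at most one 1 in each
   block of d+1 consecutive rows, so when t <= k(d+1) every column has weight
   at most k.  Disjunctness then gives every column a private row (otherwise
   the at most k columns meeting its support elsewhere would cover it), and
   distinct columns have distinct private rows, so n <= t. *)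
From mathcomp Require Import all_boot all_order all_algebra.
From mathcomp Require Import zify.

Set Implicit Arguments.
Unset Strict Implicit.
Unset Printing Implicit Defensive.

Section RunlengthWeight.

Variables (t n d : nat) (M : 'M[bool]_(t, n)).
Hypothesis runM : runlength_constrained d M.

Lemma runlength_div_inj (j : 'I_n) :
  {in col_supp M j &, injective (fun i : 'I_t => (i : nat) %/ d.+1)}.
Proof.
move=> i i'; rewrite !inE => Mi Mi' eq_div; apply: val_inj => /=.
move: (divn_eq i d.+1) (divn_eq i' d.+1) (ltn_pmod i (ltn0Sn d)) (ltn_pmod i' (ltn0Sn d)).
rewrite eq_div; move: (i' %/ d.+1 * d.+1)%N => q e e' m m'.
case: (ltngtP i i') => [lt_ii'|lt_i'i|//].
- by have := runM Mi Mi' lt_ii'; lia.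
- by have := runM Mi' Mi lt_i'i; lia.
Qed.

Lemma runlength_card_col_supp (j : 'I_n) :
  (#|col_supp M j| <= (t + d) %/ d.+1)%N.
Proof.
rewrite cardE -(size_map (fun i : 'I_t => (i : nat) %/ d.+1)).
rewrite -(size_iota 0 ((t + d) %/ d.+1)); apply: uniq_leq_size.
  by rewrite map_inj_in_uniq ?enum_uniq // => i i'; rewrite !mem_enum; apply: runlength_div_inj.
move=> _ /mapP[i _ ->]; rewrite mem_iota leq0n add0n /= leq_divRL //.
by rewrite mulSn; have := leq_divM i d.+1; have := ltn_ord i; lia.
Qed.

End RunlengthWeight.

Definition private_row (t n : nat) (M : 'M[bool]_(t, n)) (j : 'I_n) (i : 'I_t) :=
  M i j && [forall j' : 'I_n, (j' != j) ==> ~~ M i j'].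

Lemma disjunct_private_row (t n k : nat) (M : 'M[bool]_(t, n)) (j : 'I_n) :
  disjunct k M -> (#|col_supp M j| <= k)%N -> exists i, private_row M j i.
Proof.
move=> disjM wj; apply/existsP; apply: contraT; rewrite negb_exists => /forallP noPriv.
pose cover (i : 'I_t) := odflt j [pick j' | (j' != j) && M i j'].
have coverP i : M i j -> (cover i != j) && M i (cover i).
  move=> Mij; rewrite /cover; case: pickP => [// | none].
  have := noPriv i; rewrite /private_row Mij negb_forall => /existsP[j'].
  by rewrite negb_imply negbK none.
exfalso; apply: (negP (disjM j (cover @: col_supp M j) _ _)).
- exact: leq_trans (leq_imset_card _ _) wj.
- apply/imsetP => -[i]; rewrite inE => /coverP + eq_j.
  by rewrite -eq_j eqxx.
- apply/subsetP => i; rewrite inE => Mij; apply/bigcupP.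
  exists (cover i); first by apply: imset_f; rewrite inE.
  by rewrite inE; case/andP: (coverP i Mij).
Qed.

Lemma private_rows_card (t n : nat) (M : 'M[bool]_(t, n)) :
  (forall j, exists i, private_row M j i) -> (n <= t)%N.
Proof.
move=> priv; pose p j := xchoose (priv j).
have pP j : private_row M j (p j) := xchooseP (priv j).
suff inj_p : injective p by have := leq_card p inj_p; rewrite !card_ord.
move=> j1 j2 eq_p; apply/eqP; apply: contraT => ne_j.
have /andP[_ /forallP/(_ j1)] := pP j2.
by rewrite ne_j -eq_p; case/andP: (pP j1) => ->.
Qed.

Theorem lemma1 (t n k d : nat) (M : 'M[bool]_(t, n)) :
  (1 <= t)%N -> (1 <= n)%N -> (1 <= k)%N -> (d.+1 %| t)%N ->
  runlength_constrained d M -> disjunct k M ->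
  (minn n (1 + k * d.+1) <= t)%N.
Proof.
move=> _ _ _ dvd_t runM disjM.
rewrite leqNgt leq_min; apply/negP => /andP[lt_tn lt_tk].
have weight_le j : (#|col_supp M j| <= k)%N.
  apply: leq_trans (runlength_card_col_supp runM j) _.
  rewrite divnDl // (divn_small (ltnSn d)) addn0 leq_divLR //; lia.
have := private_rows_card (fun j => disjunct_private_row disjM (weight_le j)).
by rewrite leqNgt lt_tn.
Qed.
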